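(* $\mathrm{Aut}(L_{\mathbb Z})=O(3,1;\mathbb Z)$.
   Context: Let $L_{\mathbb Z}=\{(y_0,y_1,y_2,y_3)^T\in\mathbb Z^4:-y_0^2+y_1^2+y_2^2+y_3^2=0\}$ be the set of integer points on the Lorentz light cone, and let $\mathrm{Aut}(L_{\mathbb Z})$ be the group of invertible real linear transformations $U$ of $\mathbb R^4$ with $U(L_{\mathbb Z})=L_{\mathbb Z}$. Let $Q_L=\mathrm{diag}(-1,1,1,1)$ and $O(3,1;\mathbb Z)=\{U\in M_4(\mathbb Z):U^TQ_LU=Q_L\}$. *)

From HB Require Import structures.
From mathcomp Require Import all_boot all_order all_algebra.
From mathcomp Require Import boolp classical_sets reals.
Unset Printing Implicit Defensive.
Import Order.TTheory GRing.Theory Num.Theory.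
Local Open Scope ring_scope.
Local Open Scope classical_set_scope.

Definition QL (R : realType) : 'M[R]_4 :=
  diag_mx (\row_(i < 4) (if i == ord0 then -1 else 1)).

Definition LZ (R : realType) : set 'cV[R]_4 :=
  [set y : 'cV[R]_4 | (forall i, y i 0 \is a Num.int) /\
     - (y (inord 0) 0) ^+ 2 + (y (inord 1) 0) ^+ 2 + (y (inord 2) 0) ^+ 2
       + (y (inord 3) 0) ^+ 2 = 0].

Definition AutLZ (R : realType) : set 'M[R]_4 :=
  [set U : 'M[R]_4 | U \in unitmx /\ (fun y => U *m y) @` (LZ R) = LZ R].

Definition O31Z (R : realType) : set 'M[R]_4 :=
  [set U : 'M[R]_4 | (forall i j, U i j \is a Num.int) /\ U^T *m QL R *m U = QL R].

From HB Require Import structures.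
From mathcomp Require Import all_boot all_order all_algebra.
From mathcomp Require Import boolp classical_sets reals.
From mathcomp Require Import ring lra zify.
Import Order.TTheory GRing.Theory Num.Theory.
Local Open Scope ring_scope.

(* If U maps L_Z onto itself, the quadratic form of U^T Q_L U vanishes on the
   integral null cone, which forces U^T Q_L U = lam Q_L.  The images of the null
   vectors e_0 +- e_1 show 2 lam in Z, and U^-1 has multiplier 1/lam, so
   lam is one of +-1/2, +-1, +-2.  The value -1 contradicts the signature of Q_L;
   for lam = +-2 some column of U has Lorentz norm -2 although, by the formula
   U^-1 = lam^-1 Q_L U^T Q_L, its entries are integers of one parity, which is
   impossible mod 8; lam = +-1/2 is the same case for U^-1.  For lam = 1 the row
   relations U Q_L U^T = Q_L and 2 U_i0, U_i0 + U_ik in Z give integrality.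
   Conversely an integral isometry U has the integral inverse Q_L U^T Q_L. *)

Lemma intz_even_or_odd (s : int) : exists k, s = 2 * k \/ s = 2 * k + 1.
Proof.
exists (s %/ 2)%Z; have := divz_eq s 2.
have := modz_ge0 s (isT : (2 : int) != 0); have := ltz_pmod s (isT : (0 : int) < 2).
lia.
Qed.

Lemma intz_even_of_sqr_even {s t : int} : s * s = 2 * t -> exists k, s = 2 * k.
Proof. by case: (intz_even_or_odd s) => k [->|->] st; [exists k | lia]. Qed.

Lemma intz_mul_eq4 {n m : int} :
  n * m = 4 -> n <> 4 -> n <> -4 -> m <> 4 -> m <> -4 -> n = 2 \/ n = -2.
Proof.
move=> nm n_neq4 n_neqN4 m_neq4 m_neqN4.
have m_neq0 : m <> 0 by move=> m0; rewrite m0 mulr0 in nm.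
have n_bound : -4 <= n <= 4.
  have [m_pos|m_neg] : 1 <= m \/ m <= -1 by lia.
  - nia.
  - nia.
have : n = -3 \/ n = -2 \/ n = -1 \/ n = 0 \/ n = 1 \/ n = 2 \/ n = 3 by lia.
by case=> [|[|[|[|[|[|]]]]]] n_eq; rewrite n_eq in nm *; lia.
Qed.

(* The norm is divisible by 4 if a is even and is 2 mod 8 if a is odd. *)
Lemma intz_lorentz_norm_neqN2 (a k1 k2 k3 : int) :
  - a ^+ 2 + (a + 2 * k1) ^+ 2 + (a + 2 * k2) ^+ 2 + (a + 2 * k3) ^+ 2 <> -2.
Proof.
have kk_even (k : int) : exists u, k * k + k = 2 * u.
  by case: (intz_even_or_odd k) => j [->|->];
    [exists (2 * j * j + j) | exists (2 * j * j + 3 * j + 1)]; lia.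
have [u1 h1] := kk_even k1; have [u2 h2] := kk_even k2; have [u3 h3] := kk_even k3.
by case: (intz_even_or_odd a) => t [->|->]; lia.
Qed.

Section LorentzScalars.
Context {R : archiRealFieldType}.

Lemma lorentz_halfint_int {a0 a1 a2 a3 : R} :
  2 * a0 \is a Num.int -> a0 + a1 \is a Num.int -> a0 + a2 \is a Num.int ->
  a0 + a3 \is a Num.int -> - a0 ^+ 2 + a1 ^+ 2 + a2 ^+ 2 + a3 ^+ 2 \is a Num.int ->
  a0 \is a Num.int.
Proof.
move=> /intrP[s Hs] /intrP[t1 H1] /intrP[t2 H2] /intrP[t3 H3] /intrP[r Hr].
pose t := r - (t1 * t1 - t1 * s + t2 * t2 - t2 * s + t3 * t3 - t3 * s).
have st : s * s = 2 * t.
  have e1 : a1 = t1%:~R - a0 by rewrite -H1; ring.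
  have e2 : a2 = t2%:~R - a0 by rewrite -H2; ring.
  have e3 : a3 = t3%:~R - a0 by rewrite -H3; ring.
  have e0 : a0 = s%:~R / 2 by rewrite -Hs; field.
  move/eqP: Hr; rewrite e1 e2 e3 e0 -subr_eq0 => /eqP Hr.
  apply: (@intr_inj R); apply/eqP; rewrite -subr_eq0 -(mulr0 (2 : R)) -Hr /t.
  by apply/eqP; field.
have [k sk] := intz_even_of_sqr_even st.
apply/intrP; exists k; apply: (@mulfI _ 2); first by rewrite pnatr_eq0.
by rewrite Hs sk intrM.
Qed.

Lemma lorentz_norm_neqN2 {a0 a1 a2 a3 : R} :
  a0 \is a Num.int -> (a1 - a0) / 2 \is a Num.int -> (a2 - a0) / 2 \is a Num.int ->
  (a3 - a0) / 2 \is a Num.int -> - a0 ^+ 2 + a1 ^+ 2 + a2 ^+ 2 + a3 ^+ 2 <> -2.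
Proof.
move=> /intrP[a ->] /intrP[k1 H1] /intrP[k2 H2] /intrP[k3 H3].
have -> : a1 = a%:~R + 2 * k1%:~R by rewrite -H1; field.
have -> : a2 = a%:~R + 2 * k2%:~R by rewrite -H2; field.
have -> : a3 = a%:~R + 2 * k3%:~R by rewrite -H3; field.
move=> norm_eq; apply: (intz_lorentz_norm_neqN2 a k1 k2 k3).
by apply: (@intr_inj R); rewrite intrN -norm_eq; ring.
Qed.

(* Reverse Cauchy-Schwarz: Lagrange's identity turns orthogonality into a sum of
   squares equal to -(p^2 + q^2). *)
Lemma timelike_not_orthogonal {p x1 x2 x3 q y1 y2 y3 : R} :
  - p ^+ 2 + x1 ^+ 2 + x2 ^+ 2 + x3 ^+ 2 = -1 ->
  - q ^+ 2 + y1 ^+ 2 + y2 ^+ 2 + y3 ^+ 2 = -1 ->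
  - (p * q) + x1 * y1 + x2 * y2 + x3 * y3 <> 0.
Proof.
move=> x_norm y_norm xy_orth.
have lagrange : (p * y1 - q * x1) ^+ 2 + (p * y2 - q * x2) ^+ 2 + (p * y3 - q * x3) ^+ 2
    = - (p ^+ 2 + q ^+ 2).
  have -> : (p * y1 - q * x1) ^+ 2 + (p * y2 - q * x2) ^+ 2 + (p * y3 - q * x3) ^+ 2
      = p ^+ 2 * (y1 ^+ 2 + y2 ^+ 2 + y3 ^+ 2) + q ^+ 2 * (x1 ^+ 2 + x2 ^+ 2 + x3 ^+ 2)
        - 2 * p * q * (x1 * y1 + x2 * y2 + x3 * y3) by ring.
  have -> : x1 ^+ 2 + x2 ^+ 2 + x3 ^+ 2 = p ^+ 2 - 1 by lra.
  have -> : y1 ^+ 2 + y2 ^+ 2 + y3 ^+ 2 = q ^+ 2 - 1 by lra.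
  have -> : x1 * y1 + x2 * y2 + x3 * y3 = p * q by lra.
  by ring.
have := sqr_ge0 (p * y1 - q * x1); have := sqr_ge0 (p * y2 - q * x2).
have := sqr_ge0 (p * y3 - q * x3); have := sqr_ge0 p; have := sqr_ge0 q.
have := sqr_ge0 x1; have := sqr_ge0 x2; have := sqr_ge0 x3.
nra.
Qed.
End LorentzScalars.

Section Similitude.
Context {F : fieldType} {n : nat} {Q : 'M[F]_n}.
Hypothesis QQ : Q *m Q = 1%:M.

Lemma similitude_mulVmx {X : 'M[F]_n} {lam : F} : X^T *m Q *m X = lam *: Q -> lam != 0 ->
  (lam^-1 *: (Q *m X^T *m Q)) *m X = 1%:M.
Proof.
move=> XQX lam_neq0; rewrite -scalemxAl.
have -> : Q *m X^T *m Q *m X = Q *m (X^T *m Q *m X) by rewrite !mulmxA.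
by rewrite XQX -scalemxAr scalerA mulVf // scale1r QQ.
Qed.

Lemma similitude_unitmx {X : 'M[F]_n} {lam : F} : X^T *m Q *m X = lam *: Q -> lam != 0 ->
  X \in unitmx.
Proof. by move=> XQX /(similitude_mulVmx XQX) /mulmx1_unit []. Qed.

Lemma similitude_invmx {X : 'M[F]_n} {lam : F} : X^T *m Q *m X = lam *: Q -> lam != 0 ->
  invmx X = lam^-1 *: (Q *m X^T *m Q).
Proof.
move=> XQX lam_neq0; have X_unit := similitude_unitmx XQX lam_neq0.
rewrite -[invmx X]mul1mx -(similitude_mulVmx XQX lam_neq0).
by rewrite -[LHS]mulmxA mulmxV ?mulmx1.
Qed.

Lemma similitude_trmx {X : 'M[F]_n} {lam : F} : X^T *m Q *m X = lam *: Q -> lam != 0 ->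
  X *m Q *m X^T = lam *: Q.
Proof.
move=> XQX lam_neq0.
have : X *m (lam^-1 *: (Q *m X^T *m Q)) = 1%:M.
  by apply: mulmx1C; apply: similitude_mulVmx.
rewrite -scalemxAr !mulmxA => /(congr1 (fun M => lam *: M *m Q)).
by rewrite -!scalemxAl scalerA mulfV // scale1r -[_ *m Q *m Q]mulmxA QQ mulmx1 mul1mx.
Qed.

Lemma similitude_multiplierV {X : 'M[F]_n} {lam mu : F} : Q != 0 -> X \in unitmx ->
  X^T *m Q *m X = lam *: Q -> (invmx X)^T *m Q *m invmx X = mu *: Q -> lam * mu = 1.
Proof.
move=> Q_neq0 X_unit XQX VQV.
have : (X *m invmx X)^T *m Q *m (X *m invmx X) = (lam * mu) *: Q.
  rewrite trmx_mul.
  have -> : (invmx X)^T *m X^T *m Q *m (X *m invmx X)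
      = (invmx X)^T *m (X^T *m Q *m X) *m invmx X by rewrite !mulmxA.
  by rewrite XQX -scalemxAr -scalemxAl VQV scalerA.
rewrite mulmxV // trmx1 mul1mx mulmx1 => /eqP.
by rewrite -subr_eq0 -{1}[Q]scale1r -scalerBl scaler_eq0 subr_eq0 (negPf Q_neq0) orbF => /eqP.
Qed.

Lemma isometry_invmx {X : 'M[F]_n} : X \in unitmx -> X^T *m Q *m X = Q ->
  (invmx X)^T *m Q *m invmx X = Q.
Proof.
move=> X_unit XQX; rewrite -[in LHS]XQX.
have -> : (invmx X)^T *m (X^T *m Q *m X) *m invmx X
    = (X *m invmx X)^T *m Q *m (X *m invmx X) by rewrite trmx_mul !mulmxA.
by rewrite mulmxV // trmx1 mul1mx mulmx1.
Qed.
End Similitude.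

Section LorentzForm.
Context {R : realType}.
Local Notation Q := (QL R).
Local Notation i0 := (ord0 : 'I_4).
Local Notation i1 := (@Ordinal 4 1 isT).
Local Notation i2 := (@Ordinal 4 2 isT).
Local Notation i3 := (@Ordinal 4 3 isT).

Lemma ord4P (i : 'I_4) : [\/ i = i0, i = i1, i = i2 | i = i3].
Proof.
by case: i => [[|[|[|[|//]]]] ?]; [constructor 1|constructor 2|constructor 3|constructor 4];
  apply/val_inj.
Qed.

Lemma big_ord4 (F : 'I_4 -> R) : \sum_i F i = F i0 + F i1 + F i2 + F i3.
Proof.
rewrite !big_ord_recl big_ord0 addr0 !addrA.
by congr (F _ + F _ + F _ + F _); apply/val_inj.
Qed.

Lemma mulmx_QL_entry m p (A : 'M[R]_(m, 4)) (B : 'M[R]_(4, p)) j k :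
  (A *m Q *m B) j k = - (A j i0 * B i0 k) + A j i1 * B i1 k + A j i2 * B i2 k + A j i3 * B i3 k.
Proof. by rewrite mxE big_ord4 mul_mx_diag !mxE /=; ring. Qed.

Lemma QL_sqr : Q *m Q = 1%:M.
Proof.
apply/matrixP => i j; rewrite mul_mx_diag !mxE.
by case: (ord4P i) => ->; case: (ord4P j) => ->; rewrite /=; ring.
Qed.

Lemma QL_neq0 : Q != 0.
Proof. by apply/negP => /eqP /matrixP /(_ i1 i1); rewrite !mxE /= => /eqP; rewrite oner_eq0. Qed.

Lemma QL_int : Q \is a mxOver Num.int.
Proof. by apply/mxOverP => i j; rewrite !mxE; case: ifP; rewrite ?rpredMn ?rpredN ?rpred1. Qed.

Lemma LZP (y : 'cV[R]_4) :
  LZ R y <-> y \is a mxOver Num.int /\ (y^T *m Q *m y) 0 0 = 0.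
Proof.
rewrite /LZ /= (inord_val i0) (inord_val i1) (inord_val i2) (inord_val i3).
rewrite mulmx_QL_entry !mxE -!expr2.
split=> -[y_int y_null]; split=> //; first by apply/mxOverP => i j; rewrite (ord1 j).
by move=> i; apply: (mxOverP y_int).
Qed.

Definition cvec4 (a b c d : R) : 'cV[R]_4 := \col_i [:: a; b; c; d]`_i.

Lemma LZ_cvec4 (a b c d : int) : - a ^+ 2 + b ^+ 2 + c ^+ 2 + d ^+ 2 = 0 ->
  LZ R (cvec4 a%:~R b%:~R c%:~R d%:~R).
Proof.
move=> null; apply/LZP; split.
  by apply/mxOverP => -[[|[|[|[|//]]]] ?] j; rewrite mxE /= intr_int.
by rewrite mulmx_QL_entry !mxE /= -!expr2 -!rmorphXn -!rmorphN -!rmorphD null.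
Qed.

Lemma cvec4_form (S : 'M[R]_4) a b c d :
  ((cvec4 a b c d)^T *m S *m cvec4 a b c d) 0 0 =
    (a * S i0 i0 + b * S i1 i0 + c * S i2 i0 + d * S i3 i0) * a
  + (a * S i0 i1 + b * S i1 i1 + c * S i2 i1 + d * S i3 i1) * b
  + (a * S i0 i2 + b * S i1 i2 + c * S i2 i2 + d * S i3 i2) * c
  + (a * S i0 i3 + b * S i1 i3 + c * S i2 i3 + d * S i3 i3) * d.
Proof. by rewrite mxE big_ord4 !mxE !big_ord4 !mxE. Qed.

(* The null vectors e_0 +- e_k give S_0k = 0 and S_kk = - S_00; the vectors
   (3, +-2, +-2, 1) then separate the remaining off-diagonal entries. *)
Lemma form_null_cone (S : 'M[R]_4) : S^T = S ->
  (forall y, LZ R y -> (y^T *m S *m y) 0 0 = 0) -> S = - S i0 i0 *: Q.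
Proof.
move=> S_sym S_null.
have S_symE i j : S j i = S i j by rewrite -[in LHS]S_sym mxE.
have null (a b c d : int) : - a ^+ 2 + b ^+ 2 + c ^+ 2 + d ^+ 2 = 0 ->
    ((cvec4 a%:~R b%:~R c%:~R d%:~R)^T *m S *m cvec4 a%:~R b%:~R c%:~R d%:~R) 0 0 = 0.
  by move=> abcd; apply/S_null/LZ_cvec4.
move: (null 1 1 0 0 erefl) (null 1 (-1) 0 0 erefl) (null 1 0 1 0 erefl).
move: (null 1 0 (-1) 0 erefl) (null 1 0 0 1 erefl) (null 1 0 0 (-1) erefl).
move: (null 3 2 2 1 erefl) (null 3 (-2) 2 1 erefl) (null 3 2 (-2) 1 erefl).
rewrite !cvec4_form (S_symE i0 i1) (S_symE i0 i2) (S_symE i0 i3).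
rewrite (S_symE i1 i2) (S_symE i1 i3) (S_symE i2 i3) => *.
have [S01 S02 S03] : [/\ S i0 i1 = 0, S i0 i2 = 0 & S i0 i3 = 0] by split; lra.
have [S11 S22 S33] : [/\ S i1 i1 = - S i0 i0, S i2 i2 = - S i0 i0 & S i3 i3 = - S i0 i0].
  by split; lra.
have [S12 S13 S23] : [/\ S i1 i2 = 0, S i1 i3 = 0 & S i2 i3 = 0] by split; lra.
apply/matrixP => i j; rewrite !mxE.
case: (ord4P i) => ->; case: (ord4P j) => ->;
  rewrite /= ?(S_symE i0 i1, S_symE i0 i2, S_symE i0 i3, S_symE i1 i2, S_symE i1 i3, S_symE i2 i3);
  rewrite ?(S01, S02, S03, S11, S22, S33, S12, S13, S23); ring.
Qed.

Definition LZ_stable (X : 'M[R]_4) := forall y, LZ R y -> LZ R (X *m y).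

Definition multiplier (X : 'M[R]_4) := - (X^T *m Q *m X) i0 i0.

Lemma LZ_stable_gram {X : 'M[R]_4} : LZ_stable X -> X^T *m Q *m X = multiplier X *: Q.
Proof.
move=> X_st; apply: form_null_cone.
  by rewrite !trmx_mul trmxK tr_diag_mx mulmxA.
by move=> y /X_st /LZP[_]; rewrite trmx_mul !mulmxA.
Qed.

Lemma LZ_stable_row {X : 'M[R]_4} i : LZ_stable X ->
  [/\ X i i0 + X i i1 \is a Num.int, X i i0 - X i i1 \is a Num.int,
      X i i0 + X i i2 \is a Num.int & X i i0 + X i i3 \is a Num.int].
Proof.
move=> X_st; have img (a b c d : int) : - a ^+ 2 + b ^+ 2 + c ^+ 2 + d ^+ 2 = 0 ->
    (X *m cvec4 a%:~R b%:~R c%:~R d%:~R) i 0 \is a Num.int.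
  by move=> null; have /LZP[/mxOverP] := X_st _ (LZ_cvec4 a b c d null).
move: (img 1 1 0 0 erefl) (img 1 (-1) 0 0 erefl) (img 1 0 1 0 erefl) (img 1 0 0 1 erefl).
by rewrite !(mxE, big_ord4) /= !(mulr1, mulr0, addr0, mulrN1).
Qed.

Lemma two_multiplier_int {X : 'M[R]_4} : LZ_stable X -> 2 * multiplier X \is a Num.int.
Proof.
move=> X_st; have /matrixP/(_ i1 i1) G11 := LZ_stable_gram X_st.
rewrite /multiplier !mulmx_QL_entry !mxE /= in G11.
have -> : 2 * multiplier X = (X i0 i0 - X i0 i1) * (X i0 i0 + X i0 i1)
    - (X i1 i0 - X i1 i1) * (X i1 i0 + X i1 i1) - (X i2 i0 - X i2 i1) * (X i2 i0 + X i2 i1)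
    - (X i3 i0 - X i3 i1) * (X i3 i0 + X i3 i1).
  by rewrite /multiplier mulmx_QL_entry !mxE; lra.
have [r0 r0' _ _] := LZ_stable_row i0 X_st; have [r1 r1' _ _] := LZ_stable_row i1 X_st.
have [r2 r2' _ _] := LZ_stable_row i2 X_st; have [r3 r3' _ _] := LZ_stable_row i3 X_st.
by rewrite !rpredB ?rpredM.
Qed.

Lemma LZ_stable_int {X : 'M[R]_4} : LZ_stable X ->
  multiplier X \is a Num.int -> multiplier X != 0 -> X \is a mxOver Num.int.
Proof.
move=> X_st lam_int lam_neq0.
have XQXt := similitude_trmx QL_sqr (LZ_stable_gram X_st) lam_neq0.
apply/mxOverP => i j; have [r1 r1' r2 r3] := LZ_stable_row i X_st.
have row_norm : - X i i0 ^+ 2 + X i i1 ^+ 2 + X i i2 ^+ 2 + X i i3 ^+ 2 \is a Num.int.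
  have /matrixP/(_ i i) := XQXt.
  rewrite mulmx_QL_entry ![_^T _ _]mxE [in RHS]mxE -!expr2 => ->.
  by rewrite rpredM // (mxOverP QL_int).
have two_X : 2 * X i i0 \is a Num.int.
  have -> : 2 * X i i0 = (X i i0 + X i i1) + (X i i0 - X i i1) by ring.
  by rewrite rpredD.
have X0 := lorentz_halfint_int two_X r1 r2 r3 row_norm.
have Xk k : X i k = (X i i0 + X i k) - X i i0 by ring.
by case: (ord4P j) => -> //; rewrite Xk rpredB.
Qed.

Lemma gram_neqN1 (X : 'M[R]_4) : X^T *m Q *m X != -1 *: Q.
Proof.
apply/eqP => /matrixP G; move: (G i1 i1) (G i2 i2) (G i1 i2).
rewrite !mulmx_QL_entry !mxE /= -!expr2 !mulr1 !mulr0 => G11 G22 G12.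
exact: timelike_not_orthogonal G11 G22 G12.
Qed.

(* Row j of invmx X = lam^-1 Q X^T Q is column j of X scaled by -1/2, up to the
   sign of its 0-th entry. *)
Lemma LZ_stable_col_parity {X : 'M[R]_4} j : LZ_stable X -> LZ_stable (invmx X) ->
  multiplier X * Q j j = -2 -> forall k, (X k j - X i0 j) / 2 \is a Num.int.
Proof.
move=> X_st V_st lamQ k.
have lam_neq0 : multiplier X != 0 by apply/eqP => lam0; move: lamQ; rewrite lam0 mul0r; lra.
have Vform := similitude_invmx QL_sqr (LZ_stable_gram X_st) lam_neq0.
have VE k' : invmx X j k' = (multiplier X)^-1 * Q j j * (X k' j * Q k' k').
  by rewrite Vform /QL mul_mx_diag mul_diag_mx !mxE !eqxx !mulr1n; ring.
have lam_eq : multiplier X = -2 * Q j j.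
  have Qjj2 : Q j j * Q j j = 1 by rewrite !mxE eqxx mulr1n; case: ifP => _; ring.
  by rewrite -lamQ -mulrA Qjj2 mulr1.
have Qjj_neq0 : Q j j != 0 by apply/eqP => Qjj0; move: lamQ; rewrite Qjj0 mulr0; lra.
have half : (multiplier X)^-1 * Q j j = - 2^-1 by rewrite lam_eq; field.
have VD k' : k' != i0 -> (X k' j - X i0 j) / 2 = - (invmx X j i0 + invmx X j k').
  by move=> k'_neq0; rewrite !VE half !mxE (negPf k'_neq0) !eqxx /=; ring.
have [r1 _ r2 r3] := LZ_stable_row j V_st.
by case: (ord4P k) => ->; rewrite ?subrr ?mul0r ?rpred0 // VD // rpredN.
Qed.

Lemma multiplier_neq2 {X : 'M[R]_4} : LZ_stable X -> LZ_stable (invmx X) ->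
  multiplier X <> 2 /\ multiplier X <> -2.
Proof.
move=> X_st V_st.
suff no_col j : multiplier X \is a Num.int -> multiplier X * Q j j = -2 -> False.
  split=> lam_eq; [apply: (no_col i0) | apply: (no_col i1)];
    by rewrite lam_eq ?rpredN ?natr_int // !mxE /=; ring.
move=> lam_int lamQ; have par := LZ_stable_col_parity j X_st V_st lamQ.
have lam_neq0 : multiplier X != 0 by apply/eqP => lam0; move: lamQ; rewrite lam0 mul0r; lra.
have /mxOverP X_int := LZ_stable_int X_st lam_int lam_neq0.
have /matrixP/(_ j j) := LZ_stable_gram X_st.
rewrite mulmx_QL_entry ![_^T _ _]mxE [RHS]mxE lamQ -!expr2.
exact: lorentz_norm_neqN2 (X_int i0 j) (par i1) (par i2) (par i3).
Qed.

Lemma LZ_stable_isometry {X : 'M[R]_4} : X \in unitmx -> LZ_stable X -> LZ_stable (invmx X) ->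
  X \is a mxOver Num.int /\ X^T *m Q *m X = Q.
Proof.
move=> X_unit X_st V_st.
have lam_mu :=
  similitude_multiplierV QL_neq0 X_unit (LZ_stable_gram X_st) (LZ_stable_gram V_st).
have /intrP[n n_eq] := two_multiplier_int X_st.
have /intrP[m m_eq] := two_multiplier_int V_st.
have nm : n * m = 4 by apply: (@intr_inj R); rewrite intrM -n_eq -m_eq; nra.
have [X_neq2 X_neqN2] := multiplier_neq2 X_st V_st.
have [V_neq2 V_neqN2] : multiplier (invmx X) <> 2 /\ multiplier (invmx X) <> -2.
  by apply: multiplier_neq2; rewrite ?invmxK.
have [n2|nN2] : n = 2 \/ n = -2.
  apply: (intz_mul_eq4 nm) => nm4;
    [apply: X_neq2 | apply: X_neqN2 | apply: V_neq2 | apply: V_neqN2];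
    move: n_eq m_eq; rewrite nm4; lra.
- have lam1 : multiplier X = 1 by move: n_eq; rewrite n2; lra.
  split; last by rewrite LZ_stable_gram // lam1 scale1r.
  by apply: LZ_stable_int; rewrite // lam1 ?rpred1 ?oner_eq0.
- have lamN1 : multiplier X = -1 by move: n_eq; rewrite nN2; lra.
  by have := gram_neqN1 X; rewrite LZ_stable_gram // lamN1 eqxx.
Qed.

Lemma isometry_LZ_stable {X : 'M[R]_4} :
  X \is a mxOver Num.int -> X^T *m Q *m X = Q -> LZ_stable X.
Proof.
move=> X_int XQX y /LZP[y_int y_null]; apply/LZP; split; first exact: mxOverM.
have -> : (X *m y)^T *m Q *m (X *m y) = y^T *m (X^T *m Q *m X) *m y.
  by rewrite trmx_mul !mulmxA.
by rewrite XQX.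
Qed.

Lemma isometry_invmx_int {X : 'M[R]_4} :
  X \is a mxOver Num.int -> X^T *m Q *m X = Q -> invmx X \is a mxOver Num.int.
Proof.
move=> X_int XQX; have XQX1 : X^T *m Q *m X = 1 *: Q by rewrite scale1r.
rewrite (similitude_invmx QL_sqr XQX1 (oner_neq0 R)) invr1 scale1r.
have Xt_int : X^T \is a mxOver Num.int.
  by apply/mxOverP => i j; rewrite mxE (mxOverP X_int).
by rewrite !mxOverM // QL_int.
Qed.

End LorentzForm.

Theorem lemma7p3 (R : realType) : AutLZ R = O31Z R.
Proof.
apply/seteqP; split=> U /=.
- case=> U_unit U_img.
  have U_st : LZ_stable U by move=> y y_LZ; rewrite -U_img; exists y.
  have V_st : LZ_stable (invmx U).
    by move=> y; rewrite -[in X in X -> _]U_img => -[x x_LZ <-]; rewrite mulKmx.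
  by have [/mxOverP] := LZ_stable_isometry U_unit U_st V_st.
- move=> [U_int U_iso]; have {}U_int : U \is a mxOver Num.int by apply/mxOverP.
  have U_unit : U \in unitmx.
    by apply: (similitude_unitmx QL_sqr _ (oner_neq0 R)); rewrite scale1r.
  have V_st := isometry_LZ_stable (isometry_invmx_int U_int U_iso) (isometry_invmx U_unit U_iso).
  split=> //; apply/seteqP; split=> y.
  + by case=> x x_LZ <-; exact: isometry_LZ_stable.
  + by move=> y_LZ; exists (invmx U *m y); [exact: V_st | rewrite mulKVmx].
Qed.
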